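(* Let $(P,H,V,\theta)$ be a frame resolution of $(M,\Omega^1M)$ and let $\omega$ be a left strong connection on $P$. For $w\in\Omega^1M$ write $s_\theta^{-1}(w)=\sum_i p_i\otimes v_i\in\mathcal{E}$ and set \[\nabla(w)=\sum_i(\mathrm{id}-\Pi_\omega)(dp_i)\,\theta(v_i),\] the covariant derivative $D=(\mathrm{id}-\Pi_\omega)d$ on the associated bundle transported via $s_\theta$. Then $\nabla$ is a well-defined map $\Omega^1M\to\Omega^1M\otimes_M\Omega^1M=\Omega^2M$, it obeys the derivation property $\nabla(mw)=m\nabla(w)+(dm)w$ for all $m\in M$, $w\in\Omega^1M$, and explicitly \[\nabla(w)=1\otimes w-\sum_i p_i\otimes\theta(v_i)-\sum_i p_i{}^{(1)}\,\omega(p_i{}^{(2)})\,\theta(v_i).\]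
   Context: $k$ is a field. For a unital $k$-algebra $A$, $\Omega^1A=\ker(\mu:A\otimes A\to A)$ is the universal calculus with $da=1\otimes a-a\otimes1$; $\Omega^nA=\Omega^1A\otimes_A\cdots\otimes_A\Omega^1A$ ($n$ factors) is identified with a subspace of $A^{\otimes(n+1)}$, products of forms (and of forms with elements of $A$) are by concatenation, multiplying adjacent tensor factors: $(a_0\otimes\cdots\otimes a_n)(b_0\otimes\cdots\otimes b_m)=a_0\otimes\cdots\otimes a_nb_0\otimes\cdots\otimes b_m$. A quantum principal bundle: $H$ a Hopf algebra with coproduct $\Delta h=h_{(1)}\otimes h_{(2)}$, counit $\epsilon$, invertible antipode $S$; $P$ a right $H$-comodule algebra with coaction $\Delta_R(p)=p^{(1)}\otimes p^{(2)}$; $M=\{p:\Delta_Rp=p\otimes1\}$; $P$ flat as an $M$-module; and $P\otimes_MP\to P\otimes H$, $p\otimes p'\mapsto pp'^{(1)}\otimes p'^{(2)}$ bijective. For a right $H$-comodule $V$ (coaction $v\mapsto v^{(1)}\otimes v^{(2)}$), $\mathcal{E}=(P\otimes V)^H$ is the space of invariants under $p\otimes v\mapsto p^{(1)}\otimes v^{(1)}\otimes p^{(2)}v^{(2)}$. A linear $\theta:V\to\Omega^nP$ is right strongly tensorial if it is an $H$-comodule map (coaction on $\Omega^nP\subset P^{\otimes(n+1)}$ the tensor product coaction) with image in $P\Omega^nM$. A frame resolution of $(M,\Omega^1M)$ is a quantum principal bundle $(P,H)$ over $M$, a right $H$-comodule $V$ and a right strongly tensorial $\theta:V\to P\Omega^1M$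 such that $s_\theta:\mathcal{E}\to\Omega^1M$, $s_\theta(\sum p_i\otimes v_i)=\sum p_i\theta(v_i)$, is bijective. A connection is a linear $\omega:H\to\Omega^1P$ with $\omega(1)=0$, $\sum\omega_\alpha\omega^\alpha{}^{(1)}\otimes\omega^\alpha{}^{(2)}=1\otimes(h-\epsilon(h)1)$ where $\omega(h)=\sum\omega_\alpha\otimes\omega^\alpha$, and $\Delta_R(\omega(h))=\omega(h_{(2)})\otimes S(h_{(1)})h_{(3)}$. Its projection is $\Pi_\omega:\Omega^1P\to\Omega^1P$, $\Pi_\omega(\sum p\otimes p')=\sum pp'^{(1)}\omega(p'^{(2)})$. It is left strong if $(\mathrm{id}-\Pi_\omega)(dp)\in(\Omega^1M)P$ for all $p\in P$. *)

(* Tensor products are handled through *formal sums of pure tensors*: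
   an element of U (x) V is represented by a list  s : seq (U * V)  standing
   for  \sum_(x <- s) x.1 (x) x.2 , and U (x) V (x) W by  seq (U * V * W).
   Equality in the tensor product is defined by its universal property:
   a formal sum is zero in U (x)_k V iff every k-bilinear map out of U * V
   (into any k-vector space) kills it; for balanced tensor products over a
   subalgebra M, iff every M-balanced biadditive map (into any abelian group)
   kills it.  Maps into tensor products (coproducts, coactions, theta, omega)
   are functions into formal sums, with all axioms stated up to this equality. *)
From HB Require Import structures.
From mathcomp Require Import all_boot all_order all_algebra.
Set Implicit Arguments. Unset Strict Implicit. Unset Printing Implicit Defensive.
Import Order.TTheory GRing.Theory.
Local Open Scope ring_scope.

Section Tensors.
Variable k : fieldType.

Definition bilinear2 {U V W : lmodType k} (f : U -> V -> W) : Prop :=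
  (forall (a : k) u u' v, f (a *: u + u') v = a *: f u v + f u' v) /\
  (forall (a : k) u v v', f u (a *: v + v') = a *: f u v + f u v').

Definition trilinear3 {U V X W : lmodType k} (f : U -> V -> X -> W) : Prop :=
  (forall (a : k) u u' v x, f (a *: u + u') v x = a *: f u v x + f u' v x) /\
  (forall (a : k) u v v' x, f u (a *: v + v') x = a *: f u v x + f u v' x) /\
  (forall (a : k) u v x x', f u v (a *: x + x') = a *: f u v x + f u v x').

Definition tzero2 {U V : lmodType k} (s : seq (U * V)) : Prop :=
  forall (W : lmodType k) (f : U -> V -> W), bilinear2 f ->
    \sum_(x <- s) f x.1 x.2 = 0.

Definition tzero3 {U V X : lmodType k} (s : seq (U * V * X)) : Prop :=
  forall (W : lmodType k) (f : U -> V -> X -> W), trilinear3 f ->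
    \sum_(x <- s) f x.1.1 x.1.2 x.2 = 0.

Definition neg2 {U V : lmodType k} (s : seq (U * V)) : seq (U * V) :=
  [seq (- x.1, x.2) | x <- s].
Definition neg3 {U V X : lmodType k} (s : seq (U * V * X)) : seq (U * V * X) :=
  [seq (- x.1.1, x.1.2, x.2) | x <- s].
Definition scale2 {U V : lmodType k} (a : k) (s : seq (U * V)) : seq (U * V) :=
  [seq (a *: x.1, x.2) | x <- s].

Definition teq2 {U V : lmodType k} (s t : seq (U * V)) : Prop :=
  tzero2 (s ++ neg2 t).
Definition teq3 {U V X : lmodType k} (s t : seq (U * V * X)) : Prop :=
  tzero3 (s ++ neg3 t).

Definition tlinear {U U' V' : lmodType k} (f : U -> seq (U' * V')) : Prop :=
  forall (a : k) u u', teq2 (f (a *: u + u')) (scale2 a (f u) ++ f u').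

Section Hopf.
Variable H : algType k.
Variables (Delta : H -> seq (H * H)) (eps : H -> k) (S : H -> H).

Definition is_hopf_algebra : Prop :=
  [/\ tlinear Delta /\
      (forall h g, teq2 (Delta (h * g))
          [seq (x.1 * y.1, x.2 * y.2) | x <- Delta h, y <- Delta g]),
      teq2 (Delta 1) [:: (1, 1)],
      (forall h, teq3 [seq (y.1, y.2, x.2) | x <- Delta h, y <- Delta x.1]
                      [seq (x.1, y.1, y.2) | x <- Delta h, y <- Delta x.2]) &
      ([/\ (forall (a : k) h g, eps (a *: h + g) = a * eps h + eps g), (forall h g, eps (h * g) = eps h * eps g),
          eps 1 = 1,
          (forall h, \sum_(x <- Delta h) eps x.1 *: x.2 = h) &
          (forall h, \sum_(x <- Delta h) eps x.2 *: x.1 = h)] /\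
      [/\ (forall (a : k) h g, S (a *: h + g) = a *: S h + S g), bijective S,
          (forall h, \sum_(x <- Delta h) S x.1 * x.2 = eps h *: 1) &
          (forall h, \sum_(x <- Delta h) x.1 * S x.2 = eps h *: 1)])].
End Hopf.

Definition is_right_comodule (H : algType k) (Delta : H -> seq (H * H))
    (eps : H -> k) (V : lmodType k) (delta : V -> seq (V * H)) : Prop :=
  [/\ tlinear delta,
      (forall v, teq3 [seq (y.1, y.2, x.2) | x <- delta v, y <- delta x.1]
                      [seq (x.1, y.1, y.2) | x <- delta v, y <- Delta x.2]) &
      (forall v, \sum_(x <- delta v) eps x.2 *: x.1 = v)].

Definition is_comodule_algebra (H : algType k) (Delta : H -> seq (H * H))
    (eps : H -> k) (P : algType k) (DR : P -> seq (P * H)) : Prop :=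
  [/\ is_right_comodule Delta eps DR,
      (forall p q, teq2 (DR (p * q))
          [seq (x.1 * y.1, x.2 * y.2) | x <- DR p, y <- DR q]) &
      teq2 (DR 1) [:: (1, 1)]].

Section Bundle.
Variables (H : algType k) (P : algType k) (DR : P -> seq (P * H)).

(* M = { p | Delta_R p = p (x) 1 } *)
Definition coinv (p : P) : Prop := teq2 (DR p) [:: (p, 1)].

(* balanced tensor product P (x)_M N, N a left M-module given by an action
   act (only its values on elements of M matter) *)
Definition is_left_Mmodule (N : zmodType) (act : P -> N -> N) : Prop :=
  [/\ (forall m n n', coinv m -> act m (n + n') = act m n + act m n'),
      (forall m m' n, coinv m -> coinv m' -> act (m + m') n = act m n + act m' n),
      (forall m m' n, coinv m -> coinv m' -> act (m * m') n = act m (act m' n)) &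
      (forall n, act 1 n = n)].

Definition tzeroPM (N : zmodType) (act : P -> N -> N) (s : seq (P * N)) : Prop :=
  forall (W : zmodType) (g : P -> N -> W),
    (forall p p' n, g (p + p') n = g p n + g p' n) ->
    (forall p n n', g p (n + n') = g p n + g p n') ->
    (forall p m n, coinv m -> g (p * m) n = g p (act m n)) ->
    \sum_(x <- s) g x.1 x.2 = 0.

Definition flat_right_M : Prop :=
  forall (N N' : zmodType) (act : P -> N -> N) (act' : P -> N' -> N')
         (f : N -> N'),
    is_left_Mmodule act -> is_left_Mmodule act' ->
    (forall x y, f (x + y) = f x + f y) ->
    (forall m n, coinv m -> f (act m n) = act' m (f n)) ->
    injective f ->
    forall s : seq (P * N),
      tzeroPM act' [seq (x.1, f x.2) | x <- s] -> tzeroPM act s.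

Definition canmap (s : seq (P * P)) : seq (P * H) :=
  [seq (x.1 * y.1, y.2) | x <- s, y <- DR x.2].

Definition tzeroPMP (s : seq (P * P)) : Prop := tzeroPM (fun m q => m * q) s.

Definition galois_bijective : Prop :=
  (forall s, tzero2 (canmap s) -> tzeroPMP s) /\
  (forall t : seq (P * H), exists s, teq2 (canmap s) t).
End Bundle.

Definition is_QPB (H : algType k) (Delta : H -> seq (H * H)) (eps : H -> k)
    (S : H -> H) (P : algType k) (DR : P -> seq (P * H)) : Prop :=
  [/\ is_hopf_algebra Delta eps S, is_comodule_algebra Delta eps DR,
      flat_right_M DR & galois_bijective DR].

Section Calculus.
Variable P : algType k.

Definition dP (a : P) : seq (P * P) := [:: (1, a); (- a, 1)].
Definition mu2 (s : seq (P * P)) : P := \sum_(x <- s) x.1 * x.2.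
Definition inOmega1 (s : seq (P * P)) : Prop := mu2 s = 0.

(* products by concatenation *)
Definition lmul (p : P) (s : seq (P * P)) : seq (P * P) := [seq (p * x.1, x.2) | x <- s].
Definition rmul (s : seq (P * P)) (p : P) : seq (P * P) := [seq (x.1, x.2 * p) | x <- s].
Definition mul11 (s t : seq (P * P)) : seq (P * P * P) :=
  [seq (x.1, x.2 * y.1, y.2) | x <- s, y <- t].
Definition lmul3 (p : P) (s : seq (P * P * P)) : seq (P * P * P) :=
  [seq (p * x.1.1, x.1.2, x.2) | x <- s].
Definition one_tensor (s : seq (P * P)) : seq (P * P * P) :=
  [seq (1, x.1, x.2) | x <- s].

Variable inM : P -> Prop.
(* Omega^1 M, seen inside P (x) P (M (x) M -> P (x) P is injective over a field) *)
Definition inOmega1M (s : seq (P * P)) : Prop :=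
  inOmega1 s /\ exists2 s', (forall x, x \in s' -> inM x.1 /\ inM x.2) & teq2 s s'.
Definition inPOmega1M (s : seq (P * P)) : Prop :=
  exists l : seq (P * seq (P * P)),
    (forall x, x \in l -> inOmega1M x.2) /\
    teq2 s (flatten [seq lmul x.1 x.2 | x <- l]).
Definition inOmega1MP (s : seq (P * P)) : Prop :=
  exists l : seq (seq (P * P) * P),
    (forall x, x \in l -> inOmega1M x.1) /\
    teq2 s (flatten [seq rmul x.1 x.2 | x <- l]).
(* Omega^2 M = Omega^1 M (x)_M Omega^1 M, identified with its image in
   M^(x)3 (inside P^(x)3) under concatenation *)
Definition inOmega2M (t : seq (P * P * P)) : Prop :=
  exists l : seq (seq (P * P) * seq (P * P)),
    (forall x, x \in l -> inOmega1M x.1 /\ inOmega1M x.2) /\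
    teq3 t (flatten [seq mul11 x.1 x.2 | x <- l]).
End Calculus.

Section Frame.
Variables (H : algType k) (Delta : H -> seq (H * H)) (eps : H -> k) (S : H -> H).
Variables (P : algType k) (DR : P -> seq (P * H)).
Variables (V : lmodType k) (delta : V -> seq (V * H)) (theta : V -> seq (P * P)).

Definition coactPP (s : seq (P * P)) : seq (P * P * H) :=
  flatten [seq [seq (y.1, z.1, y.2 * z.2) | y <- DR x.1, z <- DR x.2] | x <- s].

Definition in_E (t : seq (P * V)) : Prop :=
  teq3 (flatten [seq [seq (y.1, z.1, y.2 * z.2) | y <- DR x.1, z <- delta x.2] | x <- t])
       [seq (x.1, x.2, 1) | x <- t].

Definition right_strongly_tensorial : Prop :=
  [/\ tlinear theta,
      (forall v, inOmega1 (theta v)),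
      (forall v, teq3 (coactPP (theta v))
                      [seq (y.1, y.2, x.2) | x <- delta v, y <- theta x.1]) &
      (forall v, inPOmega1M (coinv DR) (theta v))].

Definition s_theta (t : seq (P * V)) : seq (P * P) :=
  flatten [seq lmul x.1 (theta x.2) | x <- t].

Definition is_frame_resolution : Prop :=
  [/\ is_QPB Delta eps S DR /\ is_right_comodule Delta eps delta,
      right_strongly_tensorial,
      (forall t, in_E t -> inOmega1M (coinv DR) (s_theta t)),
      (forall t t', in_E t -> in_E t' -> teq2 (s_theta t) (s_theta t') -> teq2 t t') &
      (forall w, inOmega1M (coinv DR) w -> exists2 t, in_E t & teq2 (s_theta t) w)].

Variable omega : H -> seq (P * P).

Definition is_connection : Prop :=
  [/\ tlinear omega, (forall h, inOmega1 (omega h)),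
      tzero2 (omega 1),
      (forall h, teq2 [seq (x.1 * y.1, y.2) | x <- omega h, y <- DR x.2]
                      [:: (1, h - eps h *: 1)]) &
      (forall h, teq3 (coactPP (omega h))
          (flatten [seq [seq (z.1, z.2, S y.1 * x.2) | y <- Delta x.1, z <- omega y.2]
                   | x <- Delta h]))].

Definition Pi_omega (s : seq (P * P)) : seq (P * P) :=
  flatten [seq lmul (x.1 * y.1) (omega y.2) | x <- s, y <- DR x.2].

Definition Dcov (p : P) : seq (P * P) := dP p ++ neg2 (Pi_omega (dP p)).

Definition left_strong : Prop :=
  forall p, inOmega1MP (coinv DR) (Dcov p).

(* nabla on a representative t = sum p_i (x) v_i of s_theta^{-1}(w) *)
Definition nabla_rep (t : seq (P * V)) : seq (P * P * P) :=
  flatten [seq mul11 (Dcov x.1) (theta x.2) | x <- t].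

Definition nabla_formula (w : seq (P * P)) (t : seq (P * V)) : seq (P * P * P) :=
  one_tensor w
  ++ neg3 [seq (x.1, y.1, y.2) | x <- t, y <- theta x.2]
  ++ neg3 (flatten [seq mul11 (lmul y.1 (omega y.2)) (theta x.2)
                   | x <- t, y <- DR x.1]).
End Frame.
End Tensors.

(* The covariant derivative [D = (id - Pi_omega) d] is a comodule map, thanks to the
   covariance of omega.  Hence for [t = sum p_i (x) v_i] in [E] the element
   [nabla t = sum D(p_i) theta(v_i)] of [P (x) P (x) P] is invariant under the coaction.
   Left strongness and [theta(V) <= P Omega^1 M] give a representative of [nabla t]
   with outer legs in [M]; over a field an invariant element of [M (x) P (x) M] lies in
   [M (x) M (x) M] (expand the outer legs in independent families and pair with dual
   functionals, obtained by Zorn's lemma).  As [nabla t] is killed by both partial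
   multiplications, it is then a sum of products of two forms of [Omega^1 M].
   Independence of the representative and the Leibniz rule follow from the injectivity
   of [s_theta], since [m t] lies in [E] with [s_theta (m t) = m w]; the explicit formula
   is the expansion of [D]. *)

From HB Require Import structures.
From mathcomp Require Import all_boot all_order all_algebra.
From mathcomp Require Import boolp classical_sets.
Import GRing.Theory.
Local Open Scope ring_scope.
Set Implicit Arguments. Unset Strict Implicit. Unset Printing Implicit Defensive.

(** * Multilinear maps and formal tensors *)

Section Multilinear.
Variable k : fieldType.

Section LinearMap.
Variables (U W : lmodType k) (F : U -> W).
Hypothesis linF : linear F.

Let Flin : {linear U -> W} :=
  HB.pack_for {linear U -> W} F (GRing.isLinear.Build k U W *:%R F linF).

Lemma lin0 : F 0 = 0. Proof. exact: (raddf0 Flin). Qed.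
Lemma linN u : F (- u) = - F u. Proof. exact: (raddfN Flin). Qed.
Lemma linZ a u : F (a *: u) = a *: F u. Proof. exact: (linearZZ Flin). Qed.
Lemma lin_sum (I : Type) (r : seq I) (Q : pred I) (g : I -> U) :
  F (\sum_(i <- r | Q i) g i) = \sum_(i <- r | Q i) F (g i).
Proof. exact: (raddf_sum Flin). Qed.
End LinearMap.

Section ScalarMap.
Variables (U : lmodType k) (phi : U -> k).
Hypothesis linphi : scalar phi.

Let phil : {scalar U} :=
  HB.pack_for {scalar U} phi (GRing.isLinear.Build k U k *%R phi linphi).

Lemma scalar_sum (I : Type) (r : seq I) (Q : pred I) (g : I -> U) :
  phi (\sum_(i <- r | Q i) g i) = \sum_(i <- r | Q i) phi (g i).
Proof. exact: (raddf_sum phil). Qed.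

Lemma scalarZ a u : phi (a *: u) = a * phi u.
Proof. by have := linphi a u 0; rewrite !addr0 (raddf0 phil : phi 0 = 0) addr0. Qed.
End ScalarMap.

Section Closure.
Variables U U' W : lmodType k.

Lemma linear_id : linear (fun u : U => u). Proof. by []. Qed.

Lemma linear_0 : linear (fun _ : U => 0 : W).
Proof. by move=> a u u'; rewrite scaler0 addr0. Qed.

Lemma linear_comp (F : U' -> W) (L : U -> U') :
  linear F -> linear L -> linear (fun u => F (L u)).
Proof. by move=> linF linL a u u'; rewrite linL linF. Qed.

Lemma linear_add (F G : U -> W) : linear F -> linear G -> linear (fun u => F u + G u).
Proof. by move=> linF linG a u u'; rewrite linF linG scalerDr addrACA. Qed.

Lemma linear_opp (F : U -> W) : linear F -> linear (fun u => - F u).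
Proof. by move=> linF a u u'; rewrite linF opprD scalerN. Qed.

Lemma linear_scale (c : k) (F : U -> W) : linear F -> linear (fun u => c *: F u).
Proof. by move=> linF a u u'; rewrite linF scalerDr !scalerA mulrC. Qed.

Lemma linear_big (I : Type) (r : seq I) (G : U -> I -> W) :
  (forall i, linear (fun u => G u i)) -> linear (fun u => \sum_(i <- r) G u i).
Proof.
move=> linG a u u'; rewrite scaler_sumr -big_split /=.
by apply: eq_bigr => i _; rewrite linG.
Qed.

Lemma linear_mull (A : algType k) (b : A) (L : U -> A) :
  linear L -> linear (fun u => b * L u).
Proof. by move=> linL a u u'; rewrite linL mulrDr scalerAr. Qed.

Lemma linear_mulr (A : algType k) (b : A) (L : U -> A) :
  linear L -> linear (fun u => L u * b).
Proof. by move=> linL a u u'; rewrite linL mulrDl scalerAl. Qed.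
End Closure.

Definition quadrilinear4 {U V X Y W : lmodType k} (f : U -> V -> X -> Y -> W) : Prop :=
  [/\ forall v x y, linear (fun u => f u v x y), forall u x y, linear (fun v => f u v x y),
      forall u v y, linear (fun x => f u v x y) & forall u v x, linear (fun y => f u v x y)].

Section Arguments.
Variables U V X Y W Z : lmodType k.

Lemma bilinear2P (f : U -> V -> W) :
  bilinear2 f <-> (forall v, linear (fun u => f u v)) /\ (forall u, linear (f u)).
Proof.
split=> [[f1 f2]|[f1 f2]]; split.
- by move=> v a u u'; apply: f1.
- by move=> u a v v'; apply: f2.
- by move=> a u u' v; apply: (f1 v).
- by move=> a u v v'; apply: (f2 u).
Qed.

Lemma trilinear3P (f : U -> V -> X -> W) :
  trilinear3 f <-> [/\ forall v x, linear (fun u => f u v x),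
                       forall u x, linear (fun v => f u v x) & forall u v, linear (f u v)].
Proof.
split=> [[f1 [f2 f3]]|[f1 f2 f3]].
  by split; [move=> v x a u u'; apply: f1 | move=> u x a v v'; apply: f2
            | move=> u v a x x'; apply: f3].
split; [|split]; [move=> a u u' v x; apply: (f1 v x) | move=> a u v v' x; apply: (f2 u x)
                 | move=> a u v x x'; apply: (f3 u v)].
Qed.

Lemma bilinear2_linear1 (f : U -> V -> W) (L : Z -> U) v :
  bilinear2 f -> linear L -> linear (fun z => f (L z) v).
Proof. by case/bilinear2P=> f1 _; exact: (linear_comp (F := fun u => f u v)). Qed.

Lemma bilinear2_linear2 (f : U -> V -> W) (L : Z -> V) u :
  bilinear2 f -> linear L -> linear (fun z => f u (L z)).
Proof. by case/bilinear2P=> _ f2; exact: (linear_comp (F := f u)). Qed.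

Lemma trilinear3_linear1 (f : U -> V -> X -> W) (L : Z -> U) v x :
  trilinear3 f -> linear L -> linear (fun z => f (L z) v x).
Proof. by case/trilinear3P=> f1 _ _; exact: (linear_comp (F := fun u => f u v x)). Qed.

Lemma trilinear3_linear2 (f : U -> V -> X -> W) (L : Z -> V) u x :
  trilinear3 f -> linear L -> linear (fun z => f u (L z) x).
Proof. by case/trilinear3P=> _ f2 _; exact: (linear_comp (F := fun v => f u v x)). Qed.

Lemma trilinear3_linear3 (f : U -> V -> X -> W) (L : Z -> X) u v :
  trilinear3 f -> linear L -> linear (fun z => f u v (L z)).
Proof. by case/trilinear3P=> _ _ f3; exact: (linear_comp (F := f u v)). Qed.

Lemma quadrilinear4_linear1 (f : U -> V -> X -> Y -> W) (L : Z -> U) v x y :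
  quadrilinear4 f -> linear L -> linear (fun z => f (L z) v x y).
Proof. by case=> f1 _ _ _; exact: (linear_comp (F := fun u => f u v x y)). Qed.

Lemma quadrilinear4_linear2 (f : U -> V -> X -> Y -> W) (L : Z -> V) u x y :
  quadrilinear4 f -> linear L -> linear (fun z => f u (L z) x y).
Proof. by case=> _ f2 _ _; exact: (linear_comp (F := fun v => f u v x y)). Qed.

Lemma quadrilinear4_linear3 (f : U -> V -> X -> Y -> W) (L : Z -> X) u v y :
  quadrilinear4 f -> linear L -> linear (fun z => f u v (L z) y).
Proof. by case=> _ _ f3 _; exact: (linear_comp (F := fun x => f u v x y)). Qed.

Lemma quadrilinear4_linear4 (f : U -> V -> X -> Y -> W) (L : Z -> Y) u v x :
  quadrilinear4 f -> linear L -> linear (fun z => f u v x (L z)).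
Proof. by case=> _ _ _ f4; exact: (linear_comp (F := fun y => f u v x y)). Qed.

Lemma bilinear2I (f : U -> V -> W) :
  (forall v, linear (fun u => f u v)) -> (forall u, linear (fun v => f u v)) -> bilinear2 f.
Proof. by move=> f1 f2; apply/bilinear2P. Qed.

Lemma trilinear3I (f : U -> V -> X -> W) :
  (forall v x, linear (fun u => f u v x)) -> (forall u x, linear (fun v => f u v x)) ->
  (forall u v, linear (fun x => f u v x)) -> trilinear3 f.
Proof. by move=> f1 f2 f3; apply/trilinear3P. Qed.
End Arguments.
End Multilinear.

Section FormalTensors.
Variable k : fieldType.

Section Equality.
Variables U V X : lmodType k.

Lemma big_neg2 (W : lmodType k) (f : U -> V -> W) (t : seq (U * V)) : bilinear2 f ->
  \sum_(x <- neg2 t) f x.1 x.2 = - \sum_(x <- t) f x.1 x.2.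
Proof.
case/bilinear2P=> f1 _; rewrite big_map -sumrN.
by apply: eq_bigr => x _; exact: (linN (f1 _)).
Qed.

Lemma big_neg3 (W : lmodType k) (f : U -> V -> X -> W) (t : seq (U * V * X)) : trilinear3 f ->
  \sum_(x <- neg3 t) f x.1.1 x.1.2 x.2 = - \sum_(x <- t) f x.1.1 x.1.2 x.2.
Proof.
case/trilinear3P=> f1 _ _; rewrite big_map -sumrN.
by apply: eq_bigr => x _; exact: (linN (f1 _ _)).
Qed.

Lemma teq2P (s t : seq (U * V)) :
  teq2 s t <-> forall (W : lmodType k) (f : U -> V -> W), bilinear2 f ->
     \sum_(x <- s) f x.1 x.2 = \sum_(x <- t) f x.1 x.2.
Proof.
rewrite /teq2 /tzero2; split=> h W f hf; move: (h W f hf); rewrite big_cat big_neg2 //.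
  by move/eqP; rewrite subr_eq0 => /eqP.
by move=> ->; apply: subrr.
Qed.

Lemma teq3P (s t : seq (U * V * X)) :
  teq3 s t <-> forall (W : lmodType k) (f : U -> V -> X -> W), trilinear3 f ->
     \sum_(x <- s) f x.1.1 x.1.2 x.2 = \sum_(x <- t) f x.1.1 x.1.2 x.2.
Proof.
rewrite /teq3 /tzero3; split=> h W f hf; move: (h W f hf); rewrite big_cat big_neg3 //.
  by move/eqP; rewrite subr_eq0 => /eqP.
by move=> ->; apply: subrr.
Qed.

Lemma teq2E (s t : seq (U * V)) (W : lmodType k) (f : U -> V -> W) :
  teq2 s t -> bilinear2 f -> \sum_(x <- s) f x.1 x.2 = \sum_(x <- t) f x.1 x.2.
Proof. by move/teq2P; apply. Qed.

Lemma teq3E (s t : seq (U * V * X)) (W : lmodType k) (f : U -> V -> X -> W) :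
  teq3 s t -> trilinear3 f -> \sum_(x <- s) f x.1.1 x.1.2 x.2 = \sum_(x <- t) f x.1.1 x.1.2 x.2.
Proof. by move/teq3P; apply. Qed.

Lemma teq2_refl (s : seq (U * V)) : teq2 s s.
Proof. by apply/teq2P. Qed.

Lemma teq2_sym (s t : seq (U * V)) : teq2 s t -> teq2 t s.
Proof. by move=> st; apply/teq2P=> W f hf; rewrite (teq2E st hf). Qed.

Lemma teq2_trans (s t u : seq (U * V)) : teq2 s t -> teq2 t u -> teq2 s u.
Proof. by move=> st tu; apply/teq2P=> W f hf; rewrite (teq2E st hf) (teq2E tu hf). Qed.

Lemma teq2_cat (s1 s2 t1 t2 : seq (U * V)) :
  teq2 s1 t1 -> teq2 s2 t2 -> teq2 (s1 ++ s2) (t1 ++ t2).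
Proof. by move=> e1 e2; apply/teq2P=> W f hf; rewrite !big_cat (teq2E e1 hf) (teq2E e2 hf). Qed.

Lemma teq3_refl (s : seq (U * V * X)) : teq3 s s.
Proof. by apply/teq3P. Qed.

Lemma teq3_trans (s t u : seq (U * V * X)) : teq3 s t -> teq3 t u -> teq3 s u.
Proof. by move=> st tu; apply/teq3P=> W f hf; rewrite (teq3E st hf) (teq3E tu hf). Qed.

Lemma teq3_cat (s1 s2 t1 t2 : seq (U * V * X)) :
  teq3 s1 t1 -> teq3 s2 t2 -> teq3 (s1 ++ s2) (t1 ++ t2).
Proof. by move=> e1 e2; apply/teq3P=> W f hf; rewrite !big_cat (teq3E e1 hf) (teq3E e2 hf). Qed.
End Equality.

Lemma tlinear_big (U U' V' W : lmodType k) (F : U -> seq (U' * V')) (g : U' -> V' -> W) :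
  tlinear F -> bilinear2 g -> linear (fun u => \sum_(x <- F u) g x.1 x.2).
Proof.
move=> linF hg a u u'; rewrite (teq2E (linF a u u') hg) big_cat big_map scaler_sumr.
by congr (_ + _); apply: eq_bigr => x _; case/bilinear2P: hg => g1 _; rewrite (linZ (g1 _)).
Qed.

Lemma tlinear_big_comp (X U U' V' W : lmodType k) (F : U -> seq (U' * V')) (G : U' * V' -> W)
    (L : X -> U) :
  tlinear F -> bilinear2 (fun a b => G (a, b)) -> linear L ->
  linear (fun u => \sum_(x <- F (L u)) G x).
Proof.
move=> linF hG; apply: (linear_comp (F := fun u => \sum_(x <- F u) G x)).
have pairE u : \sum_(x <- F u) G x = \sum_(x <- F u) G (x.1, x.2) by apply: eq_bigr => -[].
by move=> a u u'; rewrite !pairE (tlinear_big linF hG).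
Qed.

End FormalTensors.

(* Redefined in the section where [Dcov] is available. *)
Ltac linearity_hook := fail.
Ltac linearity_step :=
  first [ apply: linear_id
        | apply: linear_0
        | apply: linear_big => ?
        | apply: linear_add
        | apply: linear_opp
        | apply: linear_scale
        | apply: linear_mull
        | apply: linear_mulr
        | match goal with h : bilinear2 _ |- _ =>
            first [apply: (bilinear2_linear1 _ h) | apply: (bilinear2_linear2 _ h)] end
        | match goal with h : trilinear3 _ |- _ =>
            first [apply: (trilinear3_linear1 _ _ h) | apply: (trilinear3_linear2 _ _ h)
                  | apply: (trilinear3_linear3 _ _ h)] end
        | match goal with h : quadrilinear4 _ |- _ =>
            first [apply: (quadrilinear4_linear1 _ _ _ h) | apply: (quadrilinear4_linear2 _ _ _ h)
                  | apply: (quadrilinear4_linear3 _ _ _ h)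
                  | apply: (quadrilinear4_linear4 _ _ _ h)] end
        | match goal with h : tlinear _ |- _ => apply: (tlinear_big_comp h) end
        | match goal with h : linear ?F |- _ => apply: (linear_comp (F := F) h) end
        | apply: bilinear2I => ?
        | apply: trilinear3I => ? ? ].
Ltac linearity := repeat (intros; cbn [fst snd]; first [linearity_step | linearity_hook]).

Section Products.
Variables (k : fieldType) (P : algType k).
Implicit Types s t : seq (P * P).

Lemma big_mul11 (W : zmodType) s t (F : P * P * P -> W) :
  \sum_(x <- mul11 s t) F x = \sum_(a <- s) \sum_(b <- t) F (a.1, a.2 * b.1, b.2).
Proof. exact: big_allpairs_dep. Qed.

Lemma teq2_lmul s t q : teq2 s t -> teq2 (lmul q s) (lmul q t).
Proof.
move=> st; apply/teq2P=> W g hg; rewrite !big_map.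
by apply: (teq2E (f := fun a b => g (q * a) b)) => //; linearity.
Qed.

Lemma teq2_rmul s t q : teq2 s t -> teq2 (rmul s q) (rmul t q).
Proof.
move=> st; apply/teq2P=> W g hg; rewrite !big_map.
by apply: (teq2E (f := fun a b => g a (b * q))) => //; linearity.
Qed.

Lemma teq3_mul11 s s' t t' : teq2 s s' -> teq2 t t' -> teq3 (mul11 s t) (mul11 s' t').
Proof.
move=> ss' tt'; apply/teq3P=> W F hF; rewrite !big_mul11.
rewrite (teq2E (f := fun a b => \sum_(y <- t) F a (b * y.1) y.2) ss'); last by linearity.
apply: eq_bigr => x _.
by apply: (teq2E (f := fun a b => F x.1 (x.2 * a) b)) => //; linearity.
Qed.

Section Representatives.
Variable inM : P -> Prop.

Lemma Omega1MP_left_rep s : inOmega1MP inM s ->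
  exists2 A : seq (P * P), teq2 s A & forall e, e \in A -> inM e.1.
Proof.
case=> l [lM sl].
suff [A lA AM] : exists2 A : seq (P * P), teq2 (flatten [seq rmul x.1 x.2 | x <- l]) A &
    forall e, e \in A -> inM e.1 by exists A => //; exact: teq2_trans sl lA.
elim: l lM {sl} => [|x l IHl] lM; first by exists [::]; [exact: teq2_refl|].
have [_ [s' s'M xs']] := lM x (mem_head _ _).
case: IHl => [y yl|A lA AM]; first by apply: lM; rewrite inE yl orbT.
exists (rmul s' x.2 ++ A); first exact: teq2_cat (teq2_rmul _ xs') lA.
by move=> e; rewrite mem_cat => /orP[/mapP [y ys' ->]|/AM //]; have [] := s'M y ys'.
Qed.

Lemma POmega1M_right_rep s : inPOmega1M inM s ->
  exists2 B : seq (P * P), teq2 s B & forall e, e \in B -> inM e.2.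
Proof.
case=> l [lM sl].
suff [B lB BM] : exists2 B : seq (P * P), teq2 (flatten [seq lmul x.1 x.2 | x <- l]) B &
    forall e, e \in B -> inM e.2 by exists B => //; exact: teq2_trans sl lB.
elim: l lM {sl} => [|x l IHl] lM; first by exists [::]; [exact: teq2_refl|].
have [_ [s' s'M xs']] := lM x (mem_head _ _).
case: IHl => [y yl|B lB BM]; first by apply: lM; rewrite inE yl orbT.
exists (lmul x.1 s' ++ B); first exact: teq2_cat (teq2_lmul _ xs') lB.
by move=> e; rewrite mem_cat => /orP[/mapP [y ys' ->]|/BM //]; have [] := s'M y ys'.
Qed.

Lemma inOmega2M_teq3 (s t : seq (P * P * P)) : teq3 s t -> inOmega2M inM t -> inOmega2M inM s.
Proof. by move=> st [l [lM tl]]; exists l; split=> //; exact: teq3_trans st tl. Qed.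
End Representatives.
End Products.

(** * Independent families and dual functionals *)

Section IndependentFamilies.
Variables (k : fieldType) (U : lmodType k).
Implicit Types (b : seq U) (c : nat -> k).

Definition lincomb b c : U := \sum_(i < size b) c i *: b`_i.

Definition independent b : Prop :=
  forall c, lincomb b c = 0 -> forall i, (i < size b)%N -> c i = 0.

Lemma lincombD b c c' : lincomb b (fun i => c i + c' i) = lincomb b c + lincomb b c'.
Proof. by rewrite /lincomb -big_split; apply: eq_bigr => i _; rewrite scalerDl. Qed.

Lemma lincombB b c c' : lincomb b (fun i => c i - c' i) = lincomb b c - lincomb b c'.
Proof. by rewrite /lincomb -sumrB; apply: eq_bigr => i _; rewrite scalerBl. Qed.

Lemma lincombZ b a c : lincomb b (fun i => a * c i) = a *: lincomb b c.
Proof. by rewrite /lincomb scaler_sumr; apply: eq_bigr => i _; rewrite scalerA. Qed.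

Lemma lincomb0 b : lincomb b (fun _ => 0) = 0.
Proof. by rewrite /lincomb big1 // => i _; rewrite scale0r. Qed.

Lemma lincomb_rcons b a c : lincomb (rcons b a) c = lincomb b c + c (size b) *: a.
Proof.
rewrite /lincomb size_rcons big_ord_recr /= nth_rcons ltnn eqxx; congr (_ + _).
by apply: eq_bigr => i _; rewrite nth_rcons ltn_ord.
Qed.

Lemma lincomb_delta b j : (j < size b)%N -> lincomb b (fun i => (i == j)%:R) = b`_j.
Proof.
move=> ltjb; rewrite /lincomb (bigD1 (Ordinal ltjb)) //= eqxx scale1r big1 ?addr0 // => i ij.
suff /negbTE -> : val i != j by rewrite scale0r.
by apply: contra ij => /eqP ij; apply/eqP/val_inj.
Qed.

Lemma scalar_lincomb (phi : U -> k) b c j : scalar phi ->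
  (forall i, (i < size b)%N -> phi b`_i = (i == j)%:R) ->
  (j < size b)%N -> phi (lincomb b c) = c j.
Proof.
move=> linphi phib ltjb; rewrite /lincomb scalar_sum // (bigD1 (Ordinal ltjb)) //=.
rewrite scalarZ // phib // eqxx mulr1 big1 ?addr0 // => i ij.
rewrite scalarZ // phib //; suff /negbTE -> : val i != j by rewrite mulr0.
by apply: contra ij => /eqP ij; apply/eqP/val_inj.
Qed.

Lemma independent_spanning_subseq (s : seq U) : exists b (lam : U -> nat -> k),
  [/\ independent b, {subset b <= s} & forall a, a \in s -> a = lincomb b (lam a)].
Proof.
elim: s => [|a s [b [lam [indb bs spanb]]]]; first by exists [::], (fun _ _ => 0).
have [[c ac]|notspan] := pselect (exists c, a = lincomb b c).
  exists b, (fun x => if x == a then c else lam x); split=> //.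
    by move=> x /bs; rewrite inE orbC => ->.
  by move=> x; rewrite inE; case: eqVneq => [->|_ /spanb].
exists (rcons b a), (fun x i => if x == a then (i == size b)%:R
                               else if (i < size b)%N then lam x i else 0).
split.
- move=> c; rewrite lincomb_rcons => comb0 i; rewrite size_rcons ltnS => leib.
  have cb0 : c (size b) = 0.
    apply: contrapT => /eqP cbn0; apply: notspan; exists (fun i => - (c (size b))^-1 * c i).
    rewrite lincombZ; apply: (@scalerI _ _ (c (size b))) => //.
    by rewrite scalerA mulrN mulfV // scaleN1r; apply/eqP; rewrite -addr_eq0 addrC comb0.
  move: leib; rewrite leq_eqVlt => /orP[/eqP -> //|ltib].
  by apply: indb ltib; move: comb0; rewrite cb0 scale0r addr0.
- by move=> x; rewrite mem_rcons !inE => /orP[-> //|/bs ->]; rewrite orbT.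
- move=> x; rewrite inE lincomb_rcons; case: eqVneq => [->|_] /=.
    rewrite eqxx scale1r (_ : lincomb b _ = 0) ?add0r //.
    by rewrite /lincomb big1 // => i _; rewrite (ltn_eqF (ltn_ord i)) scale0r.
  move=> /spanb {1}->; rewrite ltnn scale0r addr0 /lincomb.
  by apply: eq_bigr => i _; rewrite ltn_ord.
Qed.

Section Complement.
Variable b : seq U.

(* [C] is not required to contain [0], so that the empty set is allowed (Zorn's lemma
   needs it for the empty chain); hence vectors of [C] are always taken together with [0]. *)
Definition disjoint_from_span (C : set U) : Prop :=
  [/\ forall x y, C x -> C y -> C (x + y), forall a x, C x -> C (a *: x)
    & forall x, C x -> (exists c, x = lincomb b c) -> x = 0].

Lemma disjoint_from_span_comb C a w w' : disjoint_from_span C ->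
  (w = 0 \/ C w) -> (w' = 0 \/ C w') -> a *: w + w' = 0 \/ C (a *: w + w').
Proof.
case=> Cadd Cscale _ [->|Cw] [->|Cw']; rewrite ?scaler0 ?add0r ?addr0; [by left|by right| |].
  by right; apply: Cscale.
by right; apply: Cadd => //; apply: Cscale.
Qed.

Lemma exists_maximal_disjoint_from_span : exists C, disjoint_from_span C /\
  forall B, (C `<` B)%classic -> ~ disjoint_from_span B.
Proof.
apply: Zorn_bigcup => F FC Ftot; split.
- move=> x y [X FX Xx] [Y FY Yy].
  have [XY|YX] := Ftot X Y FX FY.
    by exists Y => //; have [Yadd _ _] := FC Y FY; apply: Yadd => //; apply: XY.
  by exists X => //; have [Xadd _ _] := FC X FX; apply: Xadd => //; apply: YX.
- by move=> a x [X FX Xx]; exists X => //; have [_ Xscale _] := FC X FX; apply: Xscale.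
- by move=> x [X FX Xx]; have [_ _ Xmeet] := FC X FX; apply: Xmeet.
Qed.

Lemma maximal_disjoint_from_span_decomposition C : disjoint_from_span C ->
  (forall B, (C `<` B)%classic -> ~ disjoint_from_span B) ->
  forall u, exists c w, (w = 0 \/ C w) /\ u = lincomb b c + w.
Proof.
move=> discC Cmax u; apply: contrapT => nodec.
have [Cadd Cscale Cmeet] := discC.
pose B : set U := fun y => exists w l, (w = 0 \/ C w) /\ y = w + l *: u.
apply: (Cmax B); first split.
- by move=> y Cy; exists y, 0; rewrite scale0r addr0; split=> //; right.
- move=> BC; apply: nodec; exists (fun _ => 0), u; rewrite lincomb0 add0r; split=> //; right.
  by apply: BC; exists 0, 1; rewrite scale1r add0r; split=> //; left.
split.
- move=> _ _ [w [l [Cw ->]]] [w' [l' [Cw' ->]]]; exists (w + w'), (l + l').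
  rewrite scalerDl addrACA; split=> //.
  by have := disjoint_from_span_comb 1 discC Cw Cw'; rewrite scale1r.
- move=> a _ [w [l [Cw ->]]]; exists (a *: w), (a * l); rewrite scalerDr scalerA; split=> //.
  by have := disjoint_from_span_comb a discC Cw (or_introl erefl); rewrite addr0.
- move=> _ [w [l [Cw ->]]] [c span_wl].
  have [l0|ln0] := eqVneq l 0.
    move: span_wl; rewrite l0 scale0r addr0 => span_w; case: Cw => [-> //|Cw].
    by apply: Cmeet => //; exists c.
  exfalso; apply: nodec; exists (fun i => l^-1 * c i), ((- l^-1) *: w); split.
    by have := disjoint_from_span_comb (- l^-1) discC Cw (or_introl erefl); rewrite addr0.
  by rewrite lincombZ -span_wl scalerDr scalerA mulVf // scale1r scaleNr addrC addKr.
Qed.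

Lemma decomposition_unique C c c' w w' : independent b -> disjoint_from_span C ->
  (w = 0 \/ C w) -> (w' = 0 \/ C w') -> lincomb b c + w = lincomb b c' + w' ->
  forall i, (i < size b)%N -> c i = c' i.
Proof.
move=> indb discC Cw Cw' e i ltib; apply/eqP; rewrite -subr_eq0; apply/eqP.
have diff : lincomb b (fun i => c i - c' i) = (- 1) *: w + w'.
  by apply/eqP; rewrite lincombB scaleN1r subr_eq -addrA (addrC w') -e (addrC (lincomb b c)) addKr.
apply: (indb (fun i => c i - c' i)) => //; rewrite diff.
have [-> //|Cd] := disjoint_from_span_comb (- 1) discC Cw Cw'.
by case: discC => _ _ Cmeet; apply: Cmeet Cd _; exists (fun i => c i - c' i).
Qed.
End Complement.

Lemma dual_functional b j : independent b -> (j < size b)%N -> exists phi : U -> k,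
  scalar phi /\ forall i, (i < size b)%N -> phi b`_i = (i == j)%:R.
Proof.
move=> indb ltjb.
have [C [discC Cmax]] := exists_maximal_disjoint_from_span b.
have dec := maximal_disjoint_from_span_decomposition discC Cmax.
pose coef u : nat -> k := projT1 (cid (dec u)).
have coefP u : exists w, (w = 0 \/ C w) /\ u = lincomb b (coef u) + w.
  by rewrite /coef; case: (cid (dec u)).
exists (fun u => coef u j); split.
- move=> a u u'.
  have [w [Cw eu]] := coefP u; have [w' [Cw' eu']] := coefP u'.
  have [w'' [Cw'' eu'']] := coefP (a *: u + u').
  apply: (decomposition_unique (c' := fun i => a * coef u i + coef u' i) indb discC Cw''
           (disjoint_from_span_comb a discC Cw Cw')) => //.
  by rewrite -eu'' lincombD lincombZ {1}eu {1}eu' scalerDr addrACA.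
- move=> i ltib; have [w [Cw e]] := coefP b`_i.
  rewrite eq_sym; apply: (decomposition_unique (c' := fun l => (l == i)%:R) indb discC Cw
                                               (or_introl erefl)) => //.
  by rewrite addr0 lincomb_delta.
Qed.
End IndependentFamilies.

Lemma trilinear3_lincomb (k : fieldType) (U X Y W : lmodType k) (F : U -> X -> Y -> W)
    (b : seq U) (d : seq Y) (c c' : nat -> k) x :
  trilinear3 F -> F (lincomb b c) x (lincomb d c') =
  \sum_(j < size b) \sum_(l < size d) (c j * c' l) *: F b`_j x d`_l.
Proof.
case/trilinear3P=> F1 _ F3; rewrite /lincomb (lin_sum (F1 _ _)); apply: eq_bigr => j _.
rewrite (linZ (F1 _ _)) (lin_sum (F3 _ _)) scaler_sumr; apply: eq_bigr => l _.
by rewrite (linZ (F3 _ _)) scalerA.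
Qed.

(** * Comodule algebras, connections and the covariant derivative *)

Section Bundle.
Variables (k : fieldType) (H : algType k) (Delta : H -> seq (H * H)) (eps : H -> k) (S : H -> H).
Hypothesis hopf : is_hopf_algebra Delta eps S.

Let Delta_linear : tlinear Delta. Proof. by case: hopf => -[]. Qed.
Let Delta_coassoc h : teq3 [seq (y.1, y.2, x.2) | x <- Delta h, y <- Delta x.1]
                           [seq (x.1, y.1, y.2) | x <- Delta h, y <- Delta x.2].
Proof. by case: hopf. Qed.
Let counitL h : \sum_(x <- Delta h) eps x.1 *: x.2 = h.
Proof. by case: hopf => _ _ _ [[]]. Qed.
Let S_linear : linear S. Proof. by case: hopf => _ _ _ [_ []]. Qed.
Let antipodeR h : \sum_(x <- Delta h) x.1 * S x.2 = eps h *: 1.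
Proof. by case: hopf => _ _ _ [_ []]. Qed.

Lemma sum_Delta_coassoc (W : lmodType k) (f : H -> H -> H -> W) h : trilinear3 f ->
  \sum_(x <- Delta h) \sum_(y <- Delta x.1) f y.1 y.2 x.2 =
  \sum_(x <- Delta h) \sum_(y <- Delta x.2) f x.1 y.1 y.2.
Proof. by move=> hf; move: (teq3E (Delta_coassoc h) hf); rewrite !big_allpairs_dep. Qed.

Lemma sum_Delta_antipode_flip (W : lmodType k) (Phi : H -> H -> W) h : bilinear2 Phi ->
  \sum_(y <- Delta h) \sum_(x <- Delta y.2) \sum_(y' <- Delta x.1) Phi (y.1 * S y'.1 * x.2) y'.2
  = \sum_(y <- Delta h) Phi y.2 y.1.
Proof.
move=> hPhi.
transitivity (\sum_(y <- Delta h) \sum_(x <- Delta y.2) \sum_(y' <- Delta x.2)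
                Phi (y.1 * S x.1 * y'.2) y'.1).
  apply: eq_bigr => y _.
  by apply: (sum_Delta_coassoc (f := fun a b c => Phi (y.1 * S a * c) b)); linearity.
transitivity (\sum_(x <- Delta h) \sum_(y <- Delta x.1) \sum_(y' <- Delta x.2)
                Phi (y.1 * S y.2 * y'.2) y'.1).
  symmetry; apply: (sum_Delta_coassoc
    (f := fun a b g => \sum_(y' <- Delta g) Phi (a * S b * y'.2) y'.1)); linearity.
have linPhi2 : linear (fun g => \sum_(y' <- Delta g) Phi y'.2 y'.1) by linearity.
rewrite -[in RHS](counitL h) (lin_sum linPhi2); apply: eq_bigr => x _.
rewrite (linZ linPhi2) scaler_sumr exchange_big /=; apply: eq_bigr => y' _.
have linPhi1 : linear (fun u => Phi (u * y'.2) y'.1) by linearity.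
by rewrite -(lin_sum linPhi1) antipodeR (linZ linPhi1) mul1r.
Qed.

Section ComoduleAlgebra.
Variables (P : algType k) (DR : P -> seq (P * H)).
Hypothesis comalg : is_comodule_algebra Delta eps DR.

Let DR_linear : tlinear DR. Proof. by case: comalg => -[]. Qed.
Let DR_coassoc p : teq3 [seq (y.1, y.2, x.2) | x <- DR p, y <- DR x.1]
                        [seq (x.1, y.1, y.2) | x <- DR p, y <- Delta x.2].
Proof. by case: comalg => -[]. Qed.
Let DRM p q : teq2 (DR (p * q)) [seq (x.1 * y.1, x.2 * y.2) | x <- DR p, y <- DR q].
Proof. by case: comalg. Qed.
Let DR1 : teq2 (DR 1) [:: (1, 1)]. Proof. by case: comalg. Qed.

Lemma sum_DR1 (W : lmodType k) (g : P -> H -> W) : bilinear2 g ->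
  \sum_(x <- DR 1) g x.1 x.2 = g 1 1.
Proof. by move=> hg; rewrite (teq2E DR1 hg) big_seq1. Qed.

Lemma sum_DRM (W : lmodType k) (g : P -> H -> W) p q : bilinear2 g ->
  \sum_(x <- DR (p * q)) g x.1 x.2 =
  \sum_(x <- DR p) \sum_(y <- DR q) g (x.1 * y.1) (x.2 * y.2).
Proof. by move=> hg; rewrite (teq2E (DRM p q) hg) big_allpairs_dep. Qed.

Lemma sum_DR_coassoc (W : lmodType k) (f : P -> H -> H -> W) p : trilinear3 f ->
  \sum_(x <- DR p) \sum_(y <- DR x.1) f y.1 y.2 x.2 =
  \sum_(x <- DR p) \sum_(y <- Delta x.2) f x.1 y.1 y.2.
Proof. by move=> hf; move: (teq3E (DR_coassoc p) hf); rewrite !big_allpairs_dep. Qed.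

Lemma sum_DR_coinv (W : lmodType k) (g : P -> H -> W) m : coinv DR m -> bilinear2 g ->
  \sum_(x <- DR m) g x.1 x.2 = g m 1.
Proof. by move=> cm hg; rewrite (teq2E cm hg) big_seq1. Qed.

Lemma big_coactPP (W : zmodType) (s : seq (P * P)) (F : P * P * H -> W) :
  \sum_(x <- coactPP DR s) F x =
  \sum_(x <- s) \sum_(y <- DR x.1) \sum_(z <- DR x.2) F (y.1, z.1, y.2 * z.2).
Proof. by rewrite big_flatten big_map; apply: eq_bigr => x _; rewrite big_allpairs_dep. Qed.

Lemma coinv1 : coinv DR 1. Proof. exact: DR1. Qed.

Lemma coinvM a b : coinv DR a -> coinv DR b -> coinv DR (a * b).
Proof.
move=> ca cb; apply/teq2P=> W g hg; rewrite big_seq1 sum_DRM //.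
rewrite (sum_DR_coinv (g := fun y1 y2 => \sum_(z <- DR b) g (y1 * z.1) (y2 * z.2))) //;
  last by linearity.
by rewrite (sum_DR_coinv (g := fun z1 z2 => g (a * z1) (1 * z2))) ?mulr1 //; linearity.
Qed.

Lemma coinvN a : coinv DR a -> coinv DR (- a).
Proof.
move=> ca; apply/teq2P=> W g hg; rewrite big_seq1.
have linDRg : linear (fun p => \sum_(z <- DR p) g z.1 z.2) by linearity.
rewrite (linN linDRg) sum_DR_coinv //.
by case/bilinear2P: hg => g1 _; rewrite (linN (g1 _)).
Qed.

Section Descent.
Variable L : seq (P * P * P).
Hypothesis L_outer : forall e, e \in L -> coinv DR e.1.1 /\ coinv DR e.2.
Hypothesis L_invariant : forall (W : lmodType k) (f : P -> P -> P -> H -> W), quadrilinear4 f ->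
  \sum_(e <- L) \sum_(z <- DR e.1.2) f e.1.1 z.1 e.2 z.2 = \sum_(e <- L) f e.1.1 e.1.2 e.2 1.

Lemma middle_leg_coinv (b d : seq P) (lam mu : P -> nat -> k) j l :
  independent b -> independent d ->
  (forall e, e \in L -> e.1.1 = lincomb b (lam e.1.1)) ->
  (forall e, e \in L -> e.2 = lincomb d (mu e.2)) ->
  (j < size b)%N -> (l < size d)%N ->
  coinv DR (\sum_(e <- L) (lam e.1.1 j * mu e.2 l) *: e.1.2).
Proof.
move=> indb indd spanb spand ltjb ltld.
have [phi [linphi phib]] := dual_functional indb ltjb.
have [psi [linpsi psid]] := dual_functional indd ltld.
have coef e : e \in L -> phi e.1.1 * psi e.2 = lam e.1.1 j * mu e.2 l.
  by move=> eL; rewrite {1}(spanb e eL) {1}(spand e eL) !(scalar_lincomb _ linphi phib,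
    scalar_lincomb _ linpsi psid).
apply/teq2P=> W g hg; rewrite big_seq1.
have linDRg : linear (fun p => \sum_(z <- DR p) g z.1 z.2) by linearity.
have ling1 : linear (fun p => g p 1) by case/bilinear2P: hg.
rewrite (lin_sum linDRg) (lin_sum ling1).
transitivity (\sum_(e <- L) (phi e.1.1 * psi e.2) *: \sum_(z <- DR e.1.2) g z.1 z.2).
  by apply: eq_big_seq => e eL; rewrite (linZ linDRg) coef.
transitivity (\sum_(e <- L) (phi e.1.1 * psi e.2) *: g e.1.2 1); last first.
  by apply: eq_big_seq => e eL; rewrite (linZ ling1) coef.
under eq_bigr do rewrite scaler_sumr.
apply: (L_invariant (f := fun a x c h => (phi a * psi c) *: g x h)); split.
- by move=> v x y a u u'; rewrite linphi mulrDl scalerDl scalerA mulrA.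
- by move=> u x y; apply: linear_scale; case/bilinear2P: hg.
- by move=> u v y a x x'; rewrite linpsi mulrDr scalerDl scalerA mulrCA.
- by move=> u v x; apply: linear_scale; case/bilinear2P: hg.
Qed.

Lemma coinvariant_descent : exists2 L' : seq (P * P * P), teq3 L L' &
  forall e, e \in L' -> [/\ coinv DR e.1.1, coinv DR e.1.2 & coinv DR e.2].
Proof.
have [b [lam [indb bL spanb]]] := independent_spanning_subseq [seq e.1.1 | e <- L].
have [d [mu [indd dL spand]]] := independent_spanning_subseq [seq e.2 | e <- L].
have spanbL e : e \in L -> e.1.1 = lincomb b (lam e.1.1) by move=> eL; apply/spanb/map_f.
have spandL e : e \in L -> e.2 = lincomb d (mu e.2) by move=> eL; apply/spand/map_f.
exists [seq (b`_j, \sum_(e <- L) (lam e.1.1 j * mu e.2 l) *: e.1.2, d`_l)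
         | j <- index_iota 0 (size b), l <- index_iota 0 (size d)].
  apply/teq3P=> W F hF; rewrite big_allpairs_dep /=.
  transitivity (\sum_(e <- L) \sum_(j < size b) \sum_(l < size d)
                  (lam e.1.1 j * mu e.2 l) *: F b`_j e.1.2 d`_l).
    by apply: eq_big_seq => e eL; rewrite {1}(spanbL e eL) {1}(spandL e eL) trilinear3_lincomb.
  rewrite exchange_big big_mkord; apply: eq_bigr => j _.
  rewrite exchange_big big_mkord; apply: eq_bigr => l _.
  case/trilinear3P: hF => _ F2 _; rewrite (lin_sum (F2 _ _)).
  by apply: eq_bigr => e _; rewrite (linZ (F2 _ _)).
move=> _ /allpairsPdep [j [l [+ + ->]]]; rewrite !mem_index_iota /= => ltjb ltld.
split; [|exact: (middle_leg_coinv indb indd spanbL spandL ltjb ltld)|].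
  by have /bL /mapP [e eL ->] := mem_nth 0 ltjb; have [] := L_outer eL.
by have /dL /mapP [e eL ->] := mem_nth 0 ltld; have [] := L_outer eL.
Qed.
End Descent.

Lemma inOmega1M_coinv a b : coinv DR a -> coinv DR b ->
  inOmega1M (coinv DR) [:: (a, b); (- (a * b), 1)].
Proof.
move=> ca cb; split; first by rewrite /inOmega1 /mu2 !big_cons big_nil /= mulr1 addr0 subrr.
exists [:: (a, b); (- (a * b), 1)]; last exact: teq2_refl.
move=> x; rewrite !inE => /orP[] /eqP -> //.
by split; [apply/coinvN/coinvM | exact: coinv1].
Qed.

(* [a (x) b (x) c = (a (x) b - ab (x) 1)(1 (x) c - c (x) 1) + a (x) bc (x) 1 + ab (x) 1 (x) c
   - ab (x) c (x) 1], and the last three terms sum to zero. *)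
Lemma Omega2M_of_coinv (L : seq (P * P * P)) :
  (forall e, e \in L -> [/\ coinv DR e.1.1, coinv DR e.1.2 & coinv DR e.2]) ->
  (forall (W : lmodType k) (g : P -> P -> W), bilinear2 g ->
     \sum_(e <- L) g (e.1.1 * e.1.2) e.2 = 0) ->
  (forall (W : lmodType k) (g : P -> P -> W), bilinear2 g ->
     \sum_(e <- L) g e.1.1 (e.1.2 * e.2) = 0) ->
  inOmega2M (coinv DR) L.
Proof.
move=> legs mul12 mul23.
exists [seq ([:: (e.1.1, e.1.2); (- (e.1.1 * e.1.2), 1)], [:: (1, e.2); (- (1 * e.2), 1)])
       | e <- L]; split.
  move=> _ /mapP [e eL ->] /=; have [c1 c2 c3] := legs e eL.
  by split; apply: inOmega1M_coinv => //; exact: coinv1.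
apply/teq3P=> W F hF; rewrite big_flatten !big_map /=; symmetry.
rewrite (eq_bigr (fun e => F e.1.1 e.1.2 e.2 - F e.1.1 (e.1.2 * e.2) 1
                           - F (e.1.1 * e.1.2) 1 e.2 + F (e.1.1 * e.1.2) e.2 1)); last first.
  move=> e _; rewrite big_mul11 !big_cons !big_nil /= !addr0 !mulr1 !mul1r mulrN.
  case/trilinear3P: hF => F1 F2 _.
  by rewrite (linN (F1 _ _)) (linN (F2 _ _)) (linN (F1 _ _)) (linN (F2 _ _)) opprK !addrA.
rewrite !big_split /= !sumrN (mul23 _ (fun a b => F a b 1)); last by linearity.
rewrite (mul12 _ (fun a b => F a 1 b)); last by linearity.
by rewrite (mul12 _ (fun a b => F a b 1)) ?oppr0 ?addr0 //; linearity.
Qed.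

Section Connection.
Variable omega : H -> seq (P * P).
Hypothesis conn : is_connection Delta eps S DR omega.

Let omega_linear : tlinear omega. Proof. by case: conn. Qed.
Let omega_Omega1 h : inOmega1 (omega h). Proof. by case: conn. Qed.
Let omega1 : tzero2 (omega 1). Proof. by case: conn. Qed.
Let omega_coaction h : teq3 (coactPP DR (omega h))
  (flatten [seq [seq (z.1, z.2, S y.1 * x.2) | y <- Delta x.1, z <- omega y.2] | x <- Delta h]).
Proof. by case: conn. Qed.

Lemma sum_coaction_omega (W : lmodType k) (f : P -> P -> H -> W) h : trilinear3 f ->
  \sum_(x <- omega h) \sum_(y <- DR x.1) \sum_(z <- DR x.2) f y.1 z.1 (y.2 * z.2) =
  \sum_(x <- Delta h) \sum_(y <- Delta x.1) \sum_(z <- omega y.2) f z.1 z.2 (S y.1 * x.2).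
Proof.
move=> hf; move: (teq3E (omega_coaction h) hf); rewrite big_coactPP big_flatten big_map => ->.
by apply: eq_bigr => x _; rewrite big_allpairs_dep.
Qed.

Lemma sum_Dcov (W : lmodType k) (G : P -> P -> W) p : bilinear2 G ->
  \sum_(z <- Dcov DR omega p) G z.1 z.2 =
  G 1 p + G (- p) 1 - \sum_(y <- DR p) \sum_(z <- omega y.2) G (y.1 * z.1) z.2.
Proof.
move=> hG; rewrite big_cat /= !big_cons big_nil addr0 big_neg2 //; congr (_ - _).
rewrite /Pi_omega big_flatten big_allpairs_dep /= !big_cons big_nil addr0 /=.
have -> : \sum_(b <- DR 1) \sum_(x <- lmul (- p * b.1) (omega b.2)) G x.1 x.2 = 0.
  rewrite (eq_bigr (fun b => \sum_(z <- omega b.2) G (- p * b.1 * z.1) z.2)); last first.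
    by move=> b _; rewrite big_map.
  rewrite (sum_DR1 (g := fun a h => \sum_(z <- omega h) G (- p * a * z.1) z.2)); last by linearity.
  by apply: (omega1 (f := fun a b => G (- p * 1 * a) b)); linearity.
rewrite addr0; apply: eq_bigr => y _; rewrite big_map.
by apply: eq_bigr => z _ /=; rewrite mul1r.
Qed.

Lemma linear_sum_Dcov (W X : lmodType k) (L : X -> P) (G : P * P -> W) :
  bilinear2 (fun a b => G (a, b)) -> linear L ->
  linear (fun u => \sum_(x <- Dcov DR omega (L u)) G x).
Proof.
move=> hG; apply: (linear_comp (F := fun p => \sum_(x <- Dcov DR omega p) G x)).
have DcovE p : \sum_(x <- Dcov DR omega p) G x = G (1, p) + G (- p, 1) -
    \sum_(y <- DR p) \sum_(z <- omega y.2) G (y.1 * z.1, z.2).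
  by rewrite -(sum_Dcov p hG); apply: eq_bigr => -[].
move=> a u u'; rewrite !DcovE; move: a u u'.
change (linear (fun p => G (1, p) + G (- p, 1) -
                         \sum_(y <- DR p) \sum_(z <- omega y.2) G (y.1 * z.1, z.2))).
apply: linear_add; last by linearity.
apply: linear_add; first by case/bilinear2P: hG.
by apply: (bilinear2_linear1 (f := fun a b => G (a, b))) => //; linearity.
Qed.

Ltac linearity_hook ::= apply: linear_sum_Dcov.

(* The factor [S(h(1))] produced by the covariance of omega cancels against
   the coaction on [p(0)]. *)
Lemma connection_term_coaction (W : lmodType k) (F : P -> P -> H -> W) p : trilinear3 F ->
  \sum_(y <- DR p) \sum_(z <- omega y.2) \sum_(a <- DR (y.1 * z.1)) \sum_(b <- DR z.2)
    F a.1 b.1 (a.2 * b.2)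
  = \sum_(y <- DR p) \sum_(y' <- DR y.1) \sum_(z <- omega y'.2) F (y'.1 * z.1) z.2 y.2.
Proof.
move=> hF.
transitivity (\sum_(y <- DR p) \sum_(a <- DR y.1) \sum_(x <- Delta y.2) \sum_(y' <- Delta x.1)
  \sum_(z <- omega y'.2) F (a.1 * z.1) z.2 (a.2 * (S y'.1 * x.2))).
  apply: eq_bigr => y _.
  transitivity (\sum_(z <- omega y.2) \sum_(a <- DR y.1) \sum_(a' <- DR z.1) \sum_(b <- DR z.2)
    F (a.1 * a'.1) b.1 (a.2 * (a'.2 * b.2))).
    apply: eq_bigr => z _.
    rewrite (sum_DRM (g := fun a h => \sum_(b <- DR z.2) F a b.1 (h * b.2))); last by linearity.
    by apply: eq_bigr => a _; apply: eq_bigr => a' _; apply: eq_bigr => b _; rewrite mulrA.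
  rewrite exchange_big /=; apply: eq_bigr => a _.
  by apply: (sum_coaction_omega (f := fun u v h => F (a.1 * u) v (a.2 * h))); linearity.
rewrite (sum_DR_coassoc (f := fun a h g => \sum_(x <- Delta g) \sum_(y' <- Delta x.1)
  \sum_(z <- omega y'.2) F (a * z.1) z.2 (h * (S y'.1 * x.2)))); last by linearity.
rewrite (sum_DR_coassoc (f := fun a g h => \sum_(z <- omega g) F (a * z.1) z.2 h)); last first.
  by linearity.
apply: eq_bigr => x _.
rewrite -(sum_Delta_antipode_flip (Phi := fun u g => \sum_(z <- omega g) F (x.1 * z.1) z.2 u));
  last by linearity.
apply: eq_bigr => y _; apply: eq_bigr => x' _; apply: eq_bigr => y' _; apply: eq_bigr => z _.
by rewrite mulrA.
Qed.

Lemma Dcov_coaction (W : lmodType k) (F : P -> P -> H -> W) p : trilinear3 F ->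
  \sum_(x <- Dcov DR omega p) \sum_(y <- DR x.1) \sum_(z <- DR x.2) F y.1 z.1 (y.2 * z.2)
  = \sum_(y <- DR p) \sum_(z <- Dcov DR omega y.1) F z.1 z.2 y.2.
Proof.
move=> hF.
rewrite (sum_Dcov (G := fun a b => \sum_(y <- DR a) \sum_(z <- DR b) F y.1 z.1 (y.2 * z.2)));
  last by linearity.
rewrite [RHS](eq_bigr (fun y => F 1 y.1 y.2 + F (- y.1) 1 y.2 -
    \sum_(y' <- DR y.1) \sum_(z <- omega y'.2) F (y'.1 * z.1) z.2 y.2)); last first.
  by move=> y _; rewrite (sum_Dcov (G := fun a b => F a b y.2)) //; linearity.
rewrite sumrB big_split /= connection_term_coaction //; congr (_ + _ - _).
  rewrite (sum_DR1 (g := fun a h => \sum_(z <- DR p) F a z.1 (h * z.2))); last by linearity.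
  by apply: eq_bigr => z _; rewrite mul1r.
rewrite (eq_bigr (fun y => F y.1 1 (y.2 * 1))); last first.
  by move=> y _; rewrite (sum_DR1 (g := fun b h => F y.1 b (y.2 * h))) //; linearity.
have linF1 : linear (fun q => \sum_(y <- DR q) F y.1 1 (y.2 * 1)) by linearity.
rewrite (linN linF1) -sumrN; apply: eq_bigr => y _; rewrite mulr1.
by case/trilinear3P: hF => F1 _ _; rewrite (linN (F1 _ _)).
Qed.

Lemma Dcov_Omega1 p : inOmega1 (Dcov DR omega p).
Proof.
rewrite /inOmega1 /mu2 (sum_Dcov (G := fun a b => a * b)); last by linearity.
rewrite mul1r mulr1 subrr sub0r big1 ?oppr0 // => y _.
under eq_bigr do rewrite -mulrA.
by rewrite -mulr_sumr; have := omega_Omega1 y.2; rewrite /inOmega1 /mu2 => ->; rewrite mulr0.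
Qed.

Lemma sum_connection_lmul (W : lmodType k) (G : P -> P -> W) m p : coinv DR m -> bilinear2 G ->
  \sum_(y <- DR (m * p)) \sum_(z <- omega y.2) G (y.1 * z.1) z.2 =
  \sum_(y <- DR p) \sum_(z <- omega y.2) G (m * (y.1 * z.1)) z.2.
Proof.
move=> cm hG.
rewrite (sum_DRM (g := fun a h => \sum_(z <- omega h) G (a * z.1) z.2)); last by linearity.
rewrite (sum_DR_coinv (g := fun a h => \sum_(y <- DR p) \sum_(z <- omega (h * y.2))
  G (a * y.1 * z.1) z.2)) //; last by linearity.
by apply: eq_bigr => y _; rewrite mul1r; apply: eq_bigr => z _; rewrite !mulrA.
Qed.

Section Frame.
Variables (V : lmodType k) (delta : V -> seq (V * H)) (theta : V -> seq (P * P)).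
Hypothesis tensorial : right_strongly_tensorial DR delta theta.
Hypothesis strong : left_strong DR omega.

Let theta_linear : tlinear theta. Proof. by case: tensorial. Qed.
Let theta_Omega1 v : inOmega1 (theta v). Proof. by case: tensorial. Qed.
Let theta_coaction v :
  teq3 (coactPP DR (theta v)) [seq (y.1, y.2, x.2) | x <- delta v, y <- theta x.1].
Proof. by case: tensorial. Qed.
Let theta_POmega1M v : inPOmega1M (coinv DR) (theta v). Proof. by case: tensorial. Qed.

Lemma sum_coaction_theta (W : lmodType k) (f : P -> P -> H -> W) v : trilinear3 f ->
  \sum_(x <- theta v) \sum_(y <- DR x.1) \sum_(z <- DR x.2) f y.1 z.1 (y.2 * z.2) =
  \sum_(x <- delta v) \sum_(y <- theta x.1) f y.1 y.2 x.2.
Proof. by move=> hf; move: (teq3E (theta_coaction v) hf); rewrite big_coactPP big_allpairs_dep. Qed.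

Lemma sum_in_E (W : lmodType k) (f : P -> V -> H -> W) t : in_E DR delta t -> trilinear3 f ->
  \sum_(x <- t) \sum_(y <- DR x.1) \sum_(z <- delta x.2) f y.1 z.1 (y.2 * z.2) =
  \sum_(x <- t) f x.1 x.2 1.
Proof.
move=> tE hf; move: (teq3E tE hf); rewrite big_flatten !big_map /= => <-.
by apply: eq_bigr => x _; rewrite big_allpairs_dep.
Qed.

Lemma big_nabla_rep (W : zmodType) t (F : P * P * P -> W) :
  \sum_(x <- nabla_rep DR theta omega t) F x =
  \sum_(x <- t) \sum_(a <- Dcov DR omega x.1) \sum_(b <- theta x.2) F (a.1, a.2 * b.1, b.2).
Proof. by rewrite big_flatten big_map; apply: eq_bigr => x _; rewrite big_mul11. Qed.

Lemma big_s_theta (W : zmodType) t (F : P * P -> W) :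
  \sum_(u <- s_theta theta t) F u = \sum_(x <- t) \sum_(y <- theta x.2) F (x.1 * y.1, y.2).
Proof. by rewrite big_flatten big_map; apply: eq_bigr => x _; rewrite big_map. Qed.

Definition coact3 (W : lmodType k) (f : P -> P -> P -> H -> W) (a b c : P) : W :=
  \sum_(y <- DR a) \sum_(z <- DR b) \sum_(u <- DR c) f y.1 z.1 u.1 (y.2 * z.2 * u.2).

Lemma nabla_rep_invariant (W : lmodType k) (f : P -> P -> P -> H -> W) t :
  quadrilinear4 f -> in_E DR delta t ->
  \sum_(n <- nabla_rep DR theta omega t) coact3 f n.1.1 n.1.2 n.2 =
  \sum_(n <- nabla_rep DR theta omega t) f n.1.1 n.1.2 n.2 1.
Proof.
move=> hf tE; rewrite !big_nabla_rep /coact3 /=.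
pose Phi p v h := \sum_(a <- Dcov DR omega p) \sum_(b <- theta v) f a.1 (a.2 * b.1) b.2 h.
transitivity (\sum_(x <- t) \sum_(y <- DR x.1) \sum_(w <- delta x.2) Phi y.1 w.1 (y.2 * w.2));
  last by apply: sum_in_E => //; rewrite /Phi; linearity.
apply: eq_bigr => x _ /=.
pose Psi a' b' h := \sum_(b <- theta x.2) \sum_(z' <- DR b.1) \sum_(u <- DR b.2)
  f a' (b' * z'.1) u.1 (h * (z'.2 * u.2)).
transitivity (\sum_(a <- Dcov DR omega x.1) \sum_(y <- DR a.1) \sum_(z <- DR a.2)
  Psi y.1 z.1 (y.2 * z.2)).
  apply: eq_bigr => a _; rewrite /Psi exchange_big /=; apply: eq_bigr => y _.
  rewrite [RHS]exchange_big /=; apply: eq_bigr => b _.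
  rewrite (sum_DRM (g := fun c h => \sum_(u <- DR b.2) f y.1 c u.1 (y.2 * h * u.2)));
    last by linearity.
  apply: eq_bigr => z _; apply: eq_bigr => z' _; apply: eq_bigr => u _.
  by rewrite !mulrA.
rewrite (Dcov_coaction (F := Psi)); last by rewrite /Psi; linearity.
apply: eq_bigr => y _; rewrite /Phi [RHS]exchange_big /=; apply: eq_bigr => a _; rewrite /Psi.
by rewrite (sum_coaction_theta (f := fun c d h' => f a.1 (a.2 * c) d (y.2 * h'))) //; linearity.
Qed.

Lemma nabla_rep_outer_coinv_rep t : exists2 L : seq (P * P * P),
  teq3 (nabla_rep DR theta omega t) L & forall e, e \in L -> coinv DR e.1.1 /\ coinv DR e.2.
Proof.
elim: t => [|x t [L tL LM]]; first by exists [::]; [exact: teq3_refl|].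
have [A DA AM] := Omega1MP_left_rep (strong x.1).
have [B thB BM] := POmega1M_right_rep (theta_POmega1M x.2).
exists (mul11 A B ++ L); first exact: teq3_cat (teq3_mul11 DA thB) tL.
move=> e; rewrite mem_cat => /orP[/allpairsPdep [a [b [aA bB ->]]]|/LM //].
by split; [exact: AM aA | exact: BM bB].
Qed.

Lemma nabla_rep_mul12 (W : lmodType k) (g : P -> P -> W) t : bilinear2 g ->
  \sum_(e <- nabla_rep DR theta omega t) g (e.1.1 * e.1.2) e.2 = 0.
Proof.
move=> hg; rewrite big_nabla_rep big1 // => x _ /=; rewrite exchange_big big1 // => b _ /=.
have linL : linear (fun u => g (u * b.1) b.2) by linearity.
under eq_bigr do rewrite mulrA.
rewrite -(lin_sum linL); have := Dcov_Omega1 x.1; rewrite /inOmega1 /mu2 => ->.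
exact: (lin0 linL).
Qed.

Lemma nabla_rep_mul23 (W : lmodType k) (g : P -> P -> W) t : bilinear2 g ->
  \sum_(e <- nabla_rep DR theta omega t) g e.1.1 (e.1.2 * e.2) = 0.
Proof.
move=> hg; rewrite big_nabla_rep big1 // => x _ /=; rewrite big1 // => a _ /=.
have linR : linear (fun u => g a.1 (a.2 * u)) by linearity.
under eq_bigr do rewrite -mulrA.
rewrite -(lin_sum linR); have := theta_Omega1 x.2; rewrite /inOmega1 /mu2 => ->.
exact: (lin0 linR).
Qed.

Lemma nabla_rep_in_Omega2M t : in_E DR delta t ->
  inOmega2M (coinv DR) (nabla_rep DR theta omega t).
Proof.
move=> tE; have [L NL LM] := nabla_rep_outer_coinv_rep t.
have Linv (W : lmodType k) (f : P -> P -> P -> H -> W) : quadrilinear4 f ->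
    \sum_(e <- L) \sum_(z <- DR e.1.2) f e.1.1 z.1 e.2 z.2 = \sum_(e <- L) f e.1.1 e.1.2 e.2 1.
  move=> hf; have := nabla_rep_invariant hf tE.
  rewrite (teq3E (f := coact3 f) NL); last by rewrite /coact3; linearity.
  rewrite (teq3E (f := fun a b c => f a b c 1) NL); last by linearity.
  move=> <-; apply: eq_big_seq => e eL; have [c1 c2] := LM e eL; rewrite /coact3.
  rewrite (sum_DR_coinv (g := fun y1 y2 => \sum_(z <- DR e.1.2) \sum_(u <- DR e.2)
    f y1 z.1 u.1 (y2 * z.2 * u.2))) //; last by linearity.
  apply: eq_bigr => z _.
  by rewrite (sum_DR_coinv (g := fun u1 u2 => f e.1.1 z.1 u1 (1 * z.2 * u2))) ?mul1r ?mulr1 //;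
    linearity.
have [L' LL' L'M] := coinvariant_descent LM Linv.
have NL' := teq3_trans NL LL'.
apply: (inOmega2M_teq3 NL'); apply: Omega2M_of_coinv => // W g hg.
  rewrite -(teq3E (f := fun a b c => g (a * b) c) NL'); last by linearity.
  exact: nabla_rep_mul12.
rewrite -(teq3E (f := fun a b c => g a (b * c)) NL'); last by linearity.
exact: nabla_rep_mul23.
Qed.

Lemma nabla_rep_teq t t' : teq2 t t' ->
  teq3 (nabla_rep DR theta omega t) (nabla_rep DR theta omega t').
Proof.
move=> tt'; apply/teq3P=> W F hF; rewrite !big_nabla_rep.
apply: (teq2E (f := fun p v => \sum_(a <- Dcov DR omega p) \sum_(b <- theta v)
  F a.1 (a.2 * b.1) b.2) tt'); linearity.
Qed.

Lemma sum_nabla_rep (W : lmodType k) (F : P -> P -> P -> W) t : trilinear3 F ->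
  \sum_(e <- nabla_rep DR theta omega t) F e.1.1 e.1.2 e.2 =
  \sum_(x <- t) \sum_(b <- theta x.2) F 1 (x.1 * b.1) b.2
  - \sum_(x <- t) \sum_(b <- theta x.2) F x.1 b.1 b.2
  - \sum_(x <- t) \sum_(y <- DR x.1) \sum_(z <- omega y.2) \sum_(b <- theta x.2)
      F (y.1 * z.1) (z.2 * b.1) b.2.
Proof.
move=> hF; rewrite big_nabla_rep -!sumrB; apply: eq_bigr => x _.
rewrite (sum_Dcov (G := fun a' b' => \sum_(b <- theta x.2) F a' (b' * b.1) b.2));
  last by linearity.
congr (_ + _ - _); rewrite -sumrN; apply: eq_bigr => b _; rewrite mul1r.
by case/trilinear3P: hF => F1 _ _; rewrite (linN (F1 _ _)).
Qed.

Lemma nabla_rep_formula w t : teq2 (s_theta theta t) w ->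
  teq3 (nabla_rep DR theta omega t) (nabla_formula DR theta omega w t).
Proof.
move=> tw; apply/teq3P=> W F hF; rewrite sum_nabla_rep //.
rewrite /nabla_formula !big_cat /= !big_neg3 // big_map /=.
rewrite -(teq2E (f := fun a b => F 1 a b) tw); last by linearity.
rewrite big_s_theta big_allpairs_dep big_flatten big_allpairs_dep /= addrA.
congr (_ - _ - _); apply: eq_bigr => x _; apply: eq_bigr => y _.
by rewrite big_mul11 big_map.
Qed.

Lemma in_E_lmul m t : coinv DR m -> in_E DR delta t ->
  in_E DR delta [seq (m * x.1, x.2) | x <- t].
Proof.
move=> cm tE; apply/teq3P=> W F hF; rewrite big_flatten !big_map /=.
rewrite -(sum_in_E (f := fun a v h => F (m * a) v h) tE); last by linearity.
apply: eq_bigr => x _; rewrite big_allpairs_dep.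
rewrite (sum_DRM (g := fun a h => \sum_(z <- delta x.2) F a z.1 (h * z.2))); last by linearity.
rewrite (sum_DR_coinv (g := fun a h => \sum_(y <- DR x.1) \sum_(z <- delta x.2)
  F (a * y.1) z.1 (h * y.2 * z.2))) //; last by linearity.
by apply: eq_bigr => y _; apply: eq_bigr => z _; rewrite mul1r.
Qed.

Lemma s_theta_lmul m t :
  teq2 (s_theta theta [seq (m * x.1, x.2) | x <- t]) (lmul m (s_theta theta t)).
Proof.
apply/teq2P=> W g hg; rewrite big_s_theta big_map /lmul big_map big_s_theta.
by apply: eq_bigr => x _; apply: eq_bigr => y _ /=; rewrite mulrA.
Qed.

Lemma nabla_rep_lmul m w t : coinv DR m -> teq2 (s_theta theta t) w ->
  teq3 (nabla_rep DR theta omega [seq (m * x.1, x.2) | x <- t])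
       (lmul3 m (nabla_rep DR theta omega t) ++ mul11 (dP m) w).
Proof.
move=> cm tw; apply/teq3P=> W F hF.
rewrite big_cat /lmul3 big_map big_mul11 /dP !big_cons big_nil /= addr0.
rewrite (sum_nabla_rep (F := fun a b c => F (m * a) b c)) //; last by linearity.
rewrite sum_nabla_rep // !big_map /=.
rewrite -(teq2E (f := fun a b => F 1 (m * a) b) tw); last by linearity.
rewrite -(teq2E (f := fun a b => F (- m) (1 * a) b) tw); last by linearity.
rewrite !big_s_theta /=.
have -> : \sum_(x <- t) \sum_(y <- DR (m * x.1)) \sum_(z <- omega y.2) \sum_(b <- theta x.2)
    F (y.1 * z.1) (z.2 * b.1) b.2 =
  \sum_(x <- t) \sum_(y <- DR x.1) \sum_(z <- omega y.2) \sum_(b <- theta x.2)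
    F (m * (y.1 * z.1)) (z.2 * b.1) b.2.
  apply: eq_bigr => x _.
  by apply: (sum_connection_lmul (G := fun a b => \sum_(c <- theta x.2) F a (b * c.1) c.2)) => //;
    linearity.
have -> : \sum_(x <- t) \sum_(y <- theta x.2) F 1 (m * (x.1 * y.1)) y.2 =
          \sum_(x <- t) \sum_(b <- theta x.2) F 1 (m * x.1 * b.1) b.2.
  by apply: eq_bigr => x _; apply: eq_bigr => b _; rewrite mulrA.
have -> : \sum_(x <- t) \sum_(y <- theta x.2) F (- m) (1 * (x.1 * y.1)) y.2 =
          - \sum_(x <- t) \sum_(b <- theta x.2) F (m * 1) (x.1 * b.1) b.2.
  rewrite -sumrN; apply: eq_bigr => x _; rewrite -sumrN; apply: eq_bigr => b _.
  by case/trilinear3P: hF => F1 _ _; rewrite mul1r mulr1 (linN (F1 _ _)).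
by rewrite addrC !addrA addrNK.
Qed.
End Frame.
End Connection.
End ComoduleAlgebra.
End Bundle.

Theorem proposition3p3 (k : fieldType)
    (H : algType k) (Delta : H -> seq (H * H)) (eps : H -> k) (S : H -> H)
    (P : algType k) (DR : P -> seq (P * H))
    (V : lmodType k) (delta : V -> seq (V * H)) (theta : V -> seq (P * P))
    (omega : H -> seq (P * P)) :
  is_frame_resolution Delta eps S DR delta theta ->
  is_connection Delta eps S DR omega ->
  left_strong DR omega ->
  (* for w in Omega^1 M and a representative t = sum p_i (x) v_i in E of
     s_theta^{-1}(w): nabla(w) lies in Omega^2 M, does not depend on the
     representative, and is given by the explicit formula *)
  (forall (w : seq (P * P)) (t : seq (P * V)),
     inOmega1M (coinv DR) w -> in_E DR delta t -> teq2 (s_theta theta t) w ->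
     [/\ inOmega2M (coinv DR) (nabla_rep DR theta omega t),
         (forall t' : seq (P * V), in_E DR delta t' -> teq2 (s_theta theta t') w ->
            teq3 (nabla_rep DR theta omega t') (nabla_rep DR theta omega t)) &
         teq3 (nabla_rep DR theta omega t) (nabla_formula DR theta omega w t)])
  /\
  (* derivation property: nabla(m w) = m nabla(w) + (dm) w *)
  (forall (m : P) (w : seq (P * P)) (t t' : seq (P * V)),
     coinv DR m -> inOmega1M (coinv DR) w ->
     in_E DR delta t -> teq2 (s_theta theta t) w ->
     in_E DR delta t' -> teq2 (s_theta theta t') (lmul m w) ->
     teq3 (nabla_rep DR theta omega t')
          (lmul3 m (nabla_rep DR theta omega t) ++ mul11 (dP m) w)).
Proof.
move=> [[[hopf comalg _ _] _] tensorial _ s_theta_inj _] conn strong.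
have nabla_teq := nabla_rep_teq comalg conn tensorial.
split=> [w t _ tE tw | m w t t' cm _ tE tw t'E t'w].
  split; [exact: (nabla_rep_in_Omega2M hopf comalg conn tensorial strong) | |
          exact: (nabla_rep_formula comalg conn)].
  move=> t' t'E t'w; apply/nabla_teq/s_theta_inj => //.
  exact: teq2_trans t'w (teq2_sym tw).
have t'_mt : teq2 t' [seq (m * x.1, x.2) | x <- t].
  apply: s_theta_inj => //; first exact: (in_E_lmul comalg).
  exact: teq2_trans t'w (teq2_sym (teq2_trans (s_theta_lmul theta m t) (teq2_lmul m tw))).
exact: teq3_trans (nabla_teq _ _ t'_mt) (nabla_rep_lmul comalg conn cm tw).
Qed.
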